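(* Let $\mathbb{F}$ be a field and $A$ a matrix over $\mathbb{F}$ of dual tree-depth at most $d$. Then there is a $(d+3,\mathbb{F})$-matrix-tree $T(A)$ such that $A=A(T(A))$ (identifying the rows of $A$ with the nodes labelled $L_R$ and the columns with the nodes labelled $L_C$).
   Context: The depth of a rooted tree is the number of edges on a longest root-to-leaf path; a rooted forest's depth is the maximum depth of its components. An elimination forest of a graph $G$ is a rooted forest $F$ with $V(F)=V(G)$ such that every edge of $G$ joins a vertex to one of its ancestors in $F$; the tree-depth $\mathrm{td}(G)$ is the minimum of $\mathrm{depth}(F)+1$ over elimination forests. The dual graph $G_D(A)$ has the rows of $A$ as vertices, two rows adjacent iff some column has non-zero entries in both; the dual tree-depth of $A$ is $\mathrm{td}(G_D(A))$. A $(d,\mathbb{F})$-matrix-tree is a rooted tree of depth at most $d$ with unary labels from $\{L_R,L_C\}\cup\{L_{i,\alpha}: i\in\{0,\dots,d\},\alpha\in\mathbb{F}\}$ such that: every node labelled $L_C$ is a leaf; every other non-root node is labelled $L_R$; and each $L_C$-leaf at distance $k\le d$ from the root carries, for each $i\in\{0,\dots,k-1\}$, exactly one label $L_{i,\alpha}$. The matrix $A(T)$ has rows the $L_R$-nodes, columns the $L_C$-nodes, and entry at $(r,c)$ equal to $0$ if $r$ is not an ancestor of $c$, and equal to the unique $\alpha$ with $c$ labelled $L_{i,\alpha}$ if $r$ is an ancestor of $c$ at distance $i$ from the root. *)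

From HB Require Import structures.
From mathcomp Require Import all_boot all_algebra.
Set Implicit Arguments. Unset Strict Implicit. Unset Printing Implicit Defensive.
Import GRing.Theory.
Local Open Scope ring_scope.

(* ---------- Rooted forests, given by a parent function ----------
   A rooted forest on a finite vertex type V is a map p : V -> V whose
   fixed points are the roots and such that every vertex reaches a root
   by iterating p.  u is an ancestor of v iff u = p^k(v) for some k. *)

Definition is_rooted_forest (V : finType) (p : V -> V) : Prop :=
  forall v : V, exists k : nat, p (iter k p v) = iter k p v.

Definition ancestor (V : finType) (p : V -> V) (u v : V) : Prop :=
  exists k : nat, iter k p v = u.

(* depth(F) <= D : every root-to-leaf path has at most D edges,
   i.e. every vertex is at most D steps below its root. *)
Definition forest_depth_le (V : finType) (p : V -> V) (D : nat) : Prop :=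
  forall v : V, p (iter D p v) = iter D p v.

Definition elimination_forest (V : finType) (adj : rel V) (p : V -> V) : Prop :=
  is_rooted_forest p /\
  forall u v : V, adj u v -> ancestor p u v \/ ancestor p v u.

Definition treedepth_le (V : finType) (adj : rel V) (t : nat) : Prop :=
  exists p : V -> V, elimination_forest adj p /\
    exists D : nat, forest_depth_le p D /\ (D.+1 <= t)%N.

Definition dual_adj (F : fieldType) (m n : nat) (A : 'M[F]_(m, n)) : rel 'I_m :=
  fun i j => (i != j) && [exists k : 'I_n, (A i k != 0) && (A j k != 0)].

Definition dual_treedepth_le (F : fieldType) (m n : nat) (A : 'M[F]_(m, n))
  (d : nat) : Prop := treedepth_le (dual_adj A) d.

(* A rooted tree on V with unary labels: mt_LR v (v has label L_R),
   mt_LC v (label L_C), mt_Lab i a v (label L_{i,a}). *)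
Record labelled_tree (F : fieldType) (V : finType) := LabelledTree {
  mt_root : V;
  mt_par : V -> V;
  mt_LR : pred V;
  mt_LC : pred V;
  mt_Lab : nat -> F -> pred V
}.

Definition node_dist (F : fieldType) (V : finType) (T : labelled_tree F V)
  (v : V) (k : nat) : Prop :=
  iter k (mt_par T) v = mt_root T /\
  forall j : nat, (j < k)%N -> iter j (mt_par T) v <> mt_root T.

Definition is_leaf (F : fieldType) (V : finType) (T : labelled_tree F V) (v : V) : Prop :=
  forall u : V, u <> v -> mt_par T u <> v.

Definition is_matrix_tree (F : fieldType) (d : nat) (V : finType)
  (T : labelled_tree F V) : Prop :=
      mt_par T (mt_root T) = mt_root T /\
      (forall v : V, exists k : nat, iter k (mt_par T) v = mt_root T) /\
      (forall v : V, iter d (mt_par T) v = mt_root T) /\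
      (forall (i : nat) (a : F) (v : V), mt_Lab T i a v -> (i <= d)%N) /\
      (forall v : V, mt_LC T v -> is_leaf T v /\ ~~ mt_LR T v) /\
      (forall v : V, v <> mt_root T -> ~~ mt_LC T v -> mt_LR T v) /\
      (forall (c : V) (k : nat), mt_LC T c -> node_dist T c k -> (k <= d)%N ->
         forall i : nat, (i < k)%N -> exists! a : F, mt_Lab T i a c).

Definition mt_entry (F : fieldType) (V : finType) (T : labelled_tree F V)
  (r c : V) (x : F) : Prop :=
  (~ ancestor (mt_par T) r c /\ x = 0) \/
  (ancestor (mt_par T) r c /\
     exists i : nat, node_dist T r i /\ mt_Lab T i x c).

(* Take an elimination forest of the dual graph of depth D < d and hang
   its roots below a new root, so that the rows become the L_R nodes.  The rows
   with a nonzero entry in a column j are pairwise adjacent in the dual graph, hence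
   form a chain of the forest; attach j as a leaf below the deepest of them.  Every
   such row is then an ancestor of j, and an ancestor of j is determined by its
   distance from the root, which determines the labels L_{t,a} of j.  All nodes lie
   within distance D + 2 <= d + 3 of the root. *)

From HB Require Import structures.
From mathcomp Require Import all_boot all_algebra zify.
From Stdlib Require Import Classical.
Set Implicit Arguments. Unset Strict Implicit. Unset Printing Implicit Defensive.

Lemma iter_fixed (T : Type) (f : T -> T) (x : T) (t : nat) : f x = x -> iter t f x = x.
Proof. by move=> fx; elim: t => //= t ->. Qed.

Section ForestDepth.

Variables (V : finType) (p : V -> V) (D : nat).
Hypothesis pD : forest_depth_le p D.

Lemma root_reachable (v : V) : exists k, p (iter k p v) == iter k p v.
Proof. by exists D; rewrite pD. Qed.

Definition depth (v : V) : nat := ex_minn (root_reachable v).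

Lemma depth_root (v : V) : p (iter (depth v) p v) = iter (depth v) p v.
Proof. by rewrite /depth; case: ex_minnP => k /eqP. Qed.

Lemma depth_min (v : V) (t : nat) : p (iter t p v) = iter t p v -> (depth v <= t)%N.
Proof. by rewrite /depth; case: ex_minnP => k _ kmin /eqP; apply: kmin. Qed.

Lemma depth_le (v : V) : (depth v <= D)%N.
Proof. exact/depth_min/pD. Qed.

Lemma iter_depth_ge (v : V) (t : nat) :
  (depth v <= t)%N -> iter t p v = iter (depth v) p v.
Proof. by move=> le; rewrite -(subnK le) iterD iter_fixed // depth_root. Qed.

Lemma iter_minn_depth (v : V) (t : nat) : iter (minn t (depth v)) p v = iter t p v.
Proof. by case: leqP => [// | /ltnW le]; rewrite iter_depth_ge. Qed.

Lemma depth_iter_le (v : V) (k : nat) : (depth (iter k p v) <= depth v - k)%N.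
Proof.
apply: depth_min; rewrite -iterD iter_depth_ge ?depth_root //; lia.
Qed.

Lemma ancestor_depth_lt (u v : V) : ancestor p u v -> u <> v -> (depth u < depth v)%N.
Proof.
case=> [[|k] <-] // neq.
have := depth_iter_le v k.+1; case: (posnP (depth v)) => [dv0 | dv_gt0]; last by lia.
by case: neq; rewrite iter_fixed //; have := depth_root v; rewrite dv0.
Qed.

Lemma ancestor_total (u u' w : V) :
  ancestor p u w -> ancestor p u' w -> ancestor p u u' \/ ancestor p u' u.
Proof.
move=> [k <-] [k' <-]; case: (leqP k k') => [le | /ltnW le].
  by right; exists (k' - k); rewrite -iterD subnK.
by left; exists (k - k'); rewrite -iterD subnK.
Qed.

Lemma ancestor_depth_inj (u u' w : V) :
  ancestor p u w -> ancestor p u' w -> depth u = depth u' -> u = u'.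
Proof.
move=> uw u'w eq_dep; case: (eqVneq u u') => // /eqP neq.
case: (ancestor_total uw u'w) => [/ancestor_depth_lt | /ancestor_depth_lt] lt.
  by have := lt neq; rewrite eq_dep ltnn.
by have := lt (nesym neq); rewrite eq_dep ltnn.
Qed.

End ForestDepth.

Section ForestTree.

Variables (R C : finType) (p : R -> R) (D : nat).
Hypothesis pD : forest_depth_le p D.
Variable cp : C -> option R.

Local Notation dep := (depth pD).

Definition tree_par (v : option (R + C)) : option (R + C) :=
  match v with
  | None => None
  | Some (inl r) => if p r == r then None else Some (inl (p r))
  | Some (inr c) => omap inl (cp c)
  end.

Lemma iter_tree_par_row (t : nat) (r : R) :
  iter t tree_par (Some (inl r)) =
    if (t <= dep r)%N then Some (inl (iter t p r)) else None.
Proof.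
elim: t => [|t IH]; first by rewrite leq0n.
rewrite iterS IH; case: (ltngtP t (dep r)) => [lt | // | eq].
  by rewrite /= ifN //; apply/eqP => /(depth_min pD); rewrite leqNgt lt.
by rewrite /= eq depth_root eqxx.
Qed.

Lemma tree_par_height (t : nat) (v : option (R + C)) :
  (D.+2 <= t)%N -> iter t tree_par v = None.
Proof.
have row_height u s : (D < s)%N -> iter s tree_par (Some (inl u)) = None.
  by move=> lt; rewrite iter_tree_par_row ifN // -ltnNge (leq_ltn_trans (depth_le pD u)).
move=> le; case: v => [[r|c]|]; [exact/row_height/ltnW | | exact: iter_fixed].
case: t le => // t le; rewrite iterSr /=.
by case: (cp c) => [i|]; [exact: row_height | exact: iter_fixed].
Qed.

Lemma tree_par_not_col (v : option (R + C)) (c : C) : tree_par v <> Some (inr c).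
Proof. by case: v => [[r|c']|] //=; [case: eqP | case: (cp c')]. Qed.

Lemma node_dist_row (F : fieldType) (LR LC : pred (option (R + C)))
    (Lab : nat -> F -> pred (option (R + C))) (r : R) :
  node_dist (LabelledTree None tree_par LR LC Lab) (Some (inl r)) (dep r).+1.
Proof.
split=> [|t]; first by rewrite /= iter_tree_par_row leqnn /= depth_root eqxx.
by rewrite ltnS /= iter_tree_par_row => ->.
Qed.

Lemma ancestor_row_col (r : R) (c : C) :
  ancestor tree_par (Some (inl r)) (Some (inr c)) <->
  exists2 i, cp c = Some i & ancestor p r i.
Proof.
split=> [[[|k]] | [i ci [k ir]]] //.
  rewrite iterSr /=; case: (cp c) => [i|] /=; last by rewrite iter_fixed.
  by rewrite iter_tree_par_row; case: ifP => // _ [ir]; exists i => //; exists k.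
exists (minn k (dep i)).+1.
by rewrite iterSr /= ci /= iter_tree_par_row geq_minr iter_minn_depth ir.
Qed.

End ForestTree.

Local Open Scope ring_scope.

Section MatrixTree.

Variables (F : fieldType) (m n : nat) (A : 'M[F]_(m, n)) (p : 'I_m -> 'I_m) (D : nat).
Hypothesis pD : forest_depth_le p D.

Local Notation dep := (depth pD).

Definition col_par (j : 'I_n) : option 'I_m :=
  if [pick i | A i j != 0] is Some i0 then Some [arg max_(i > i0 | A i j != 0) dep i]
  else None.

Definition col_label (j : 'I_n) (t : nat) : F :=
  if [pick r | ((dep r).+1 == t) && (A r j != 0)] is Some r then A r j else 0.

Definition matrix_tree (b : nat) : labelled_tree F (option ('I_m + 'I_n)) :=
  LabelledTree None (tree_par p col_par)
    (fun v => if v is Some (inl _) then true else false)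
    (fun v => if v is Some (inr _) then true else false)
    (fun t a v => (t <= b)%N && (if v is Some (inr j) then a == col_label j t else false)).

Lemma is_matrix_tree_matrix_tree (b : nat) : (D.+2 <= b)%N -> is_matrix_tree b (matrix_tree b).
Proof.
move=> le_b; have height := tree_par_height pD col_par.
split; [by [] | split; [|split; [|split; [|split; [|split]]]]].
- by move=> v; exists D.+2; apply: height.
- by move=> v; apply: height.
- by move=> i a v /andP[].
- by case=> [[r|j]|] //= _; split=> // u _; apply: tree_par_not_col.
- by case=> [[r|j]|].
- case=> [[r|j]|] // k _ _ le_k i lt_i; exists (col_label j i).
  by split=> [|a /andP[_ /eqP]] //=; rewrite (leq_trans (ltnW lt_i) le_k) eqxx.
Qed.

Hypothesis p_elim : forall u v, dual_adj A u v -> ancestor p u v \/ ancestor p v u.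

Lemma nonzero_ancestor_col_par (r : 'I_m) (j : 'I_n) :
  A r j != 0 -> exists2 i, col_par j = Some i & ancestor p r i.
Proof.
move=> nz_r; rewrite /col_par; case: pickP => [i0 nz_i0 | /(_ r)]; last by rewrite nz_r.
case: arg_maxnP => // i nz_i i_max; exists i => //.
case: (eqVneq r i) => [-> | neq]; first by exists 0%N.
have adj : dual_adj A r i by rewrite /dual_adj neq; apply/existsP; exists j; rewrite nz_r.
case: (p_elim adj) => // /(ancestor_depth_lt pD) /(_ (nesym (elimN eqP neq))).
by have := i_max r nz_r; rewrite /= leqNgt => /negP.
Qed.

Lemma col_label_ancestor (r i : 'I_m) (j : 'I_n) :
  col_par j = Some i -> ancestor p r i -> col_label j (dep r).+1 = A r j.
Proof.
move=> par_j r_i; rewrite /col_label; case: pickP => [r' /andP[/eqP [eq_dep] nz_r'] |].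
  have [i' par_j' r'_i'] := nonzero_ancestor_col_par nz_r'.
  move: par_j'; rewrite par_j => -[eq_i]; rewrite -eq_i in r'_i'.
  by rewrite (ancestor_depth_inj r'_i' r_i eq_dep).
by move=> /(_ r); rewrite eqxx /= => /negbFE/eqP.
Qed.

Lemma matrix_tree_entry (b : nat) (r : 'I_m) (j : 'I_n) : (D.+2 <= b)%N ->
  mt_entry (matrix_tree b) (Some (inl r)) (Some (inr j)) (A r j).
Proof.
move=> le_b; case: (classic (ancestor (tree_par p col_par) (Some (inl r)) (Some (inr j)))).
  move=> /(ancestor_row_col pD) [i par_j r_i]; right; split.
    by apply/(ancestor_row_col pD); exists i.
  exists (dep r).+1; split; first exact: node_dist_row.
  rewrite /= (col_label_ancestor par_j r_i) eqxx andbT.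
  by rewrite (leq_trans _ le_b) // ltnS leqW ?depth_le.
move=> not_anc; left; split=> //; case: (eqVneq (A r j) 0) => // nz_r.
by case: not_anc; apply/(ancestor_row_col pD); apply: nonzero_ancestor_col_par.
Qed.

End MatrixTree.

Theorem lemma11 (F : fieldType) (m n d : nat) (A : 'M[F]_(m, n)) :
  dual_treedepth_le A d ->
  exists (V : finType) (T : labelled_tree F V) (fR : 'I_m -> V) (fC : 'I_n -> V),
    is_matrix_tree (d + 3) T /\
        injective fR /\ injective fC /\
        (forall v : V, mt_LR T v <-> exists i : 'I_m, fR i = v) /\
        (forall v : V, mt_LC T v <-> exists j : 'I_n, fC j = v) /\
        (forall (i : 'I_m) (j : 'I_n), mt_entry T (fR i) (fC j) (A i j)).
Proof.
move=> [p [[_ p_elim] [D [pD lt_D_d]]]].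
have le_b : (D.+2 <= d + 3)%N by lia.
exists _, (matrix_tree A pD (d + 3)), (fun i => Some (inl i)), (fun j => Some (inr j)).
split; first exact: is_matrix_tree_matrix_tree.
split; first by move=> i i' [].
split; first by move=> j j' [].
split; first by case=> [[r|j]|]; split=> //; [exists r | case=> ? | case=> ?].
split; first by case=> [[r|j]|]; split=> //; [case=> ? | exists j | case=> ?].
by move=> r j; apply: matrix_tree_entry.
Qed.
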